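(* Fix a horizon $T\ge 1$, $N\ge 1$ net-capacity-surplus profiles $(P_t(k))_{t=1}^T$, $k=1,\dots,N$, and an initial state of charge $S_0\ge 0$. For parameters $\overline{S}\ge S_0$ (energy capacity) and $\overline{x}\ge 0$ (power capacity), let $v_k(\overline{S},\overline{x})$ be the optimal value of problem (P1) for profile $k$, and $$\mathrm{EUE}(\overline{S},\overline{x})=\frac1N\sum_{k=1}^N\Big(\sum_{t=1}^T p_t^-(k)+v_k(\overline{S},\overline{x})\Big).$$ Then (P1) is feasible for every such parameter pair. Moreover, if the qualified capacity is taken to be $\overline{S}$, or $\overline{x}$, or more generally if the parameters move along a ray $(\overline{S},\overline{x})=(\overline{S}^0+a\theta,\ \overline{x}^0+b\theta)$, $\theta\ge 0$, with fixed $a,b\ge 0$, $(a,b)\neq(0,0)$, then $\mathrm{EUE}$, viewed as a function of this single parameter, has the following properties: (i) it is continuous and piecewise linear (with finitely many pieces); (ii) it is non-increasing, so the marginal reliability impact $\mathrm{MRI}=-\partial\,\mathrm{EUE}/\partial\,\mathrm{QC}$ is non-negative wherever it exists, and both one-sided derivatives of $\mathrm{EUE}$ are $\le 0$ everywhere. This holds regardless of the profiles $P_t(k)$.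
   Context: For a real number $P_t$ (the net capacity surplus at hour $t$: total available non-storage capacity minus demand), define the net power surplus $p_t^+=\max\{P_t,0\}$ and deficiency $p_t^-=\max\{-P_t,0\}$; thus $p_t^\pm\ge 0$ and $p_t^+p_t^-=0$. For one profile, problem (P1) (single storage under reliability dispatch) is $$\min_{S_1,\dots,S_T}\ \sum_{t=1}^T\min\{0,\,S_t-S_{t-1}\}$$ subject to, for all $t=1,\dots,T$ (with $S_0$ the given constant): $0\le S_t\le \overline{S}$ (multipliers $\lambda_{1t},\lambda_{2t}\ge0$), $-\overline{x}\le S_t-S_{t-1}\le \overline{x}$ (multipliers $\lambda_{3t}$ for the lower, $\lambda_{4t}$ for the upper bound), $-p_t^-\le S_t-S_{t-1}\le p_t^+$ (multipliers $\lambda_{5t},\lambda_{6t}$). Here $S_t$ is the state of charge at the end of hour $t$. The unserved energy of the profile is $\sum_t p_t^-+$ (optimal value), and EUE is the average over the $N$ equally likely profiles. *)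

From Stdlib Require Import Reals.
From Coquelicot Require Import Coquelicot.
Open Scope R_scope.

Fixpoint sum1 (n : nat) (f : nat -> R) : R :=
  match n with O => 0 | Datatypes.S m => sum1 m f + f (Datatypes.S m) end.

Fixpoint sum0 (n : nat) (f : nat -> R) : R :=
  match n with O => 0 | Datatypes.S m => sum0 m f + f m end.

Definition pplus (p : R) : R := Rmax p 0.
Definition pminus (p : R) : R := Rmax (- p) 0.

(* Feasibility of a state-of-charge trajectory SoC (SoC 0 = S0, SoC t = end of
   hour t) for problem (P1) with profile P (P t = net capacity surplus at hour t). *)
Definition P1_feasible (T : nat) (P : nat -> R) (S0 Sbar xbar : R)
  (SoC : nat -> R) : Prop :=
  SoC O = S0 /\
  forall t : nat, (1 <= t <= T)%nat ->
    0 <= SoC t <= Sbar /\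
    - xbar <= SoC t - SoC (pred t) <= xbar /\
    - pminus (P t) <= SoC t - SoC (pred t) <= pplus (P t).

Definition P1_obj (T : nat) (SoC : nat -> R) : R :=
  sum1 T (fun t => Rmin 0 (SoC t - SoC (pred t))).

Definition P1_value (T : nat) (P : nat -> R) (S0 Sbar xbar : R) : R :=
  real (Glb_Rbar (fun v => exists SoC,
          P1_feasible T P S0 Sbar xbar SoC /\ v = P1_obj T SoC)).

(* EUE over N equally likely profiles Ps k (k = 0..N-1). *)
Definition EUE (T N : nat) (Ps : nat -> nat -> R) (S0 Sbar xbar : R) : R :=
  / INR N * sum0 N (fun k =>
     sum1 T (fun t => pminus (Ps k t)) + P1_value T (Ps k) S0 Sbar xbar).

Definition piecewise_linear_nonneg (f : R -> R) : Prop :=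
  exists (n : nat) (br sl ic : nat -> R),
    br O = 0 /\
    (forall i, (i < n)%nat -> br i < br (Datatypes.S i)) /\
    (forall i th, (i < n)%nat -> br i <= th <= br (Datatypes.S i) ->
                  f th = sl i * th + ic i) /\
    (forall th, br n <= th -> f th = sl n * th + ic n).

Definition continuous_nonneg (f : R -> R) : Prop :=
  forall th, 0 <= th ->
    filterlim f (within (fun x => 0 <= x) (locally th)) (locally (f th)).

From Stdlib Require Import Reals Lra Lia Classical Arith.
From Coquelicot Require Import Coquelicot.
Open Scope R_scope.

(* The greedy dispatch, which discharges as much as the deficiency, the power
   capacity and the stored energy allow and charges as much as the surplus,
   the power capacity and the free capacity allow, is optimal for (P1).  Hence
   each optimal value is an explicit expression in the parameters built from
   sums, differences, scalings and minima.  Along a ray the parameters are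
   affine in theta; near any point, on either side, and near +oo the
   difference of two affine functions has constant sign, so a minimum of
   functions that are affine there is again affine there.  Thus EUE is
   affine on one-sided neighbourhoods of every point and of +oo, which by
   compactness of [0, M] gives finitely many pieces, continuity and one-sided
   derivatives.  Enlarging the parameters enlarges the feasible set, so EUE is
   non-increasing and all these derivatives are non-positive. *)

Ltac destruct_minmax :=
  unfold pplus, pminus, Rmin, Rmax in *;
  repeat match goal with
  | |- context [Rle_dec ?a ?b] => destruct (Rle_dec a b)
  | H : context [Rle_dec ?a ?b] |- _ => destruct (Rle_dec a b)
  end.

Fixpoint greedy (P : nat -> R) (S0 Sbar xbar : R) (t : nat) : R :=
  match t with
  | O => S0
  | Datatypes.S m =>
      if Rle_dec (P (Datatypes.S m)) 0
      then greedy P S0 Sbar xbar m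
           - Rmin (Rmin xbar (- P (Datatypes.S m))) (greedy P S0 Sbar xbar m)
      else greedy P S0 Sbar xbar m
           + Rmin (Rmin xbar (P (Datatypes.S m))) (Sbar - greedy P S0 Sbar xbar m)
  end.

Definition partial_obj (t : nat) (SoC : nat -> R) : R :=
  sum1 t (fun u => Rmin 0 (SoC u - SoC (pred u))).

Section Greedy.

Variables (P : nat -> R) (S0 Sbar xbar : R).
Hypotheses (HS0 : 0 <= S0 <= Sbar) (Hxbar : 0 <= xbar).

Lemma greedy_bounds t : 0 <= greedy P S0 Sbar xbar t <= Sbar.
Proof.
  induction t as [|t IH]; simpl; [lra|].
  destruct (Rle_dec (P (Datatypes.S t)) 0); destruct_minmax; lra.
Qed.

Lemma greedy_feasible T : P1_feasible T P S0 Sbar xbar (greedy P S0 Sbar xbar).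
Proof.
  split; [reflexivity|]; intros [|t] Ht; [lia|].
  pose proof (greedy_bounds t); simpl pred; simpl greedy.
  destruct (Rle_dec (P (Datatypes.S t)) 0); destruct_minmax; lra.
Qed.

(* [- partial_obj t] is the energy discharged up to hour [t]: greedy has
   discharged at least as much, and has discharged-plus-stored at least as
   much, as any feasible dispatch. *)
Lemma greedy_dominates T SoC : P1_feasible T P S0 Sbar xbar SoC ->
  forall t, (t <= T)%nat ->
  partial_obj t (greedy P S0 Sbar xbar) <= partial_obj t SoC /\
  partial_obj t (greedy P S0 Sbar xbar) - greedy P S0 Sbar xbar t
    <= partial_obj t SoC - SoC t.
Proof.
  intros [HSoC0 HSoC] t; induction t as [|t IH]; intros Ht.
  - unfold partial_obj; simpl; rewrite HSoC0; lra.
  - destruct IH as [IH1 IH2]; [lia|].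
    destruct (HSoC (Datatypes.S t)) as [B [X D]]; [lia|].
    pose proof (greedy_bounds t).
    unfold partial_obj in *; simpl sum1; simpl pred in *; simpl greedy.
    destruct (Rle_dec (P (Datatypes.S t)) 0); destruct_minmax; lra.
Qed.

Lemma P1_value_greedy T :
  P1_value T P S0 Sbar xbar = P1_obj T (greedy P S0 Sbar xbar).
Proof.
  unfold P1_value.
  rewrite (is_glb_Rbar_unique _ (Finite (P1_obj T (greedy P S0 Sbar xbar))));
    [reflexivity|split].
  - intros v [SoC [HSoC ->]].
    exact (proj1 (greedy_dominates T SoC HSoC T (le_n T))).
  - intros l Hl; apply Hl; exists (greedy P S0 Sbar xbar).
    split; [apply greedy_feasible|reflexivity].
Qed.

End Greedy.

Lemma P1_feasible_widen T P S0 Sbar1 xbar1 Sbar2 xbar2 SoC :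
  Sbar1 <= Sbar2 -> xbar1 <= xbar2 ->
  P1_feasible T P S0 Sbar1 xbar1 SoC -> P1_feasible T P S0 Sbar2 xbar2 SoC.
Proof.
  intros HS Hx [H0 H]; split; [exact H0|].
  intros t Ht; specialize (H t Ht); lra.
Qed.

Lemma P1_value_antitone T P S0 Sbar1 xbar1 Sbar2 xbar2 :
  0 <= S0 <= Sbar1 -> 0 <= xbar1 -> Sbar1 <= Sbar2 -> xbar1 <= xbar2 ->
  P1_value T P S0 Sbar2 xbar2 <= P1_value T P S0 Sbar1 xbar1.
Proof.
  intros HS0 Hx HS Hxx.
  rewrite !P1_value_greedy by lra.
  apply (greedy_dominates P S0 Sbar2 xbar2 ltac:(lra) ltac:(lra) T); [|lia].
  apply (P1_feasible_widen _ _ _ Sbar1 xbar1); [lra|lra|].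
  apply greedy_feasible; lra.
Qed.

Definition affine_near (F : (R -> Prop) -> Prop) (f : R -> R) : Prop :=
  exists s c, F (fun x => f x = s * x + c).

Definition sign_stable (F : (R -> Prop) -> Prop) : Prop :=
  forall s c, F (fun x => 0 <= s * x + c) \/ F (fun x => s * x + c <= 0).

Section AffineNear.

Variable F : (R -> Prop) -> Prop.
Context {FF : Filter F}.

Lemma affine_near_affine p q : affine_near F (fun x => p + q * x).
Proof. exists q, p; apply filter_forall; intros; ring. Qed.

Lemma affine_near_const p : affine_near F (fun _ => p).
Proof. exists 0, p; apply filter_forall; intros; ring. Qed.

Lemma affine_near_plus f g :
  affine_near F f -> affine_near F g -> affine_near F (fun x => f x + g x).
Proof.
  intros [s1 [c1 Hf]] [s2 [c2 Hg]]; exists (s1 + s2), (c1 + c2).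
  generalize (filter_and _ _ Hf Hg); apply filter_imp; intros x [-> ->]; ring.
Qed.

Lemma affine_near_minus f g :
  affine_near F f -> affine_near F g -> affine_near F (fun x => f x - g x).
Proof.
  intros [s1 [c1 Hf]] [s2 [c2 Hg]]; exists (s1 - s2), (c1 - c2).
  generalize (filter_and _ _ Hf Hg); apply filter_imp; intros x [-> ->]; ring.
Qed.

Lemma affine_near_scal k f : affine_near F f -> affine_near F (fun x => k * f x).
Proof.
  intros [s [c Hf]]; exists (k * s), (k * c).
  revert Hf; apply filter_imp; intros x ->; ring.
Qed.

Lemma affine_near_min f g : sign_stable F ->
  affine_near F f -> affine_near F g -> affine_near F (fun x => Rmin (f x) (g x)).
Proof.
  intros HF [s1 [c1 Hf]] [s2 [c2 Hg]].
  destruct (HF (s1 - s2) (c1 - c2)) as [Hd|Hd]; [exists s2, c2|exists s1, c1];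
    generalize (filter_and _ _ Hd (filter_and _ _ Hf Hg)); apply filter_imp;
    intros x [Hx [Efx Egx]].
  - rewrite Rmin_right; [exact Egx|lra].
  - rewrite Rmin_left; [exact Efx|lra].
Qed.

End AffineNear.

Inductive germ_filter : ((R -> Prop) -> Prop) -> Prop :=
  | germ_right th : germ_filter (within (fun x => th <= x) (locally th))
  | germ_left th : germ_filter (within (fun x => x <= th) (locally th))
  | germ_pinfty : germ_filter (Rbar_locally p_infty).

Definition locally_piecewise_affine (f : R -> R) : Prop :=
  forall F, germ_filter F -> affine_near F f.

Lemma germ_filter_Filter F : germ_filter F -> Filter F.
Proof.
  intros []; [apply within_filter, locally_filter|apply within_filter, locally_filter|].
  apply Rbar_locally_filter.
Qed.

Lemma affine_continuous s c th : continuous (fun x => s * x + c) th.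
Proof.
  apply continuity_pt_filterlim, derivable_continuous_pt.
  apply (derivable_pt_plus (fun x => s * x)).
  - apply derivable_pt_scal, derivable_pt_id.
  - apply derivable_pt_const.
Qed.

Lemma affine_sign_locally s c th : s * th + c <> 0 ->
  locally th (fun x => 0 <= s * x + c) \/ locally th (fun x => s * x + c <= 0).
Proof.
  intros Hne; destruct (Rle_dec 0 (s * th + c));
    [left; apply (affine_continuous s c th (fun y => 0 <= y))
    |right; apply (affine_continuous s c th (fun y => y <= 0))];
    exists (mkposreal _ (Rabs_pos_lt _ Hne)); intros y Hy;
    change (Rabs (y - (s * th + c)) < Rabs (s * th + c)) in Hy;
    split_Rabs; lra.
Qed.

Lemma germ_filter_sign_stable F : germ_filter F -> sign_stable F.
Proof.
  intros HF s c; destruct HF as [th|th|].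
  - destruct (Req_dec (s * th + c) 0) as [Hzero|Hne].
    + destruct (Rle_dec 0 s); [left|right];
        unfold within; apply filter_forall; intros x Hx; nra.
    + destruct (affine_sign_locally s c th Hne); [left|right];
        apply filter_le_within; assumption.
  - destruct (Req_dec (s * th + c) 0) as [Hzero|Hne].
    + destruct (Rle_dec 0 s); [right|left];
        unfold within; apply filter_forall; intros x Hx; nra.
    + destruct (affine_sign_locally s c th Hne); [left|right];
        apply filter_le_within; assumption.
  - destruct (Rtotal_order s 0) as [Hs|[Hs|Hs]].
    + right; exists (- c / s); intros x Hx.
      assert (s * (- c / s) = - c) by (field; lra); nra.
    + destruct (Rle_dec 0 c); [left|right]; exists 0; intros; subst; lra.
    + left; exists (- c / s); intros x Hx.
      assert (s * (- c / s) = - c) by (field; lra); nra.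
Qed.

Lemma lpa_affine p q : locally_piecewise_affine (fun x => p + q * x).
Proof. intros F HF; apply (affine_near_affine F (FF := germ_filter_Filter F HF)). Qed.

Lemma lpa_const p : locally_piecewise_affine (fun _ => p).
Proof. intros F HF; apply (affine_near_const F (FF := germ_filter_Filter F HF)). Qed.

Lemma lpa_plus f g : locally_piecewise_affine f -> locally_piecewise_affine g ->
  locally_piecewise_affine (fun x => f x + g x).
Proof.
  intros Hf Hg F HF; apply (affine_near_plus F (FF := germ_filter_Filter F HF)); auto.
Qed.

Lemma lpa_minus f g : locally_piecewise_affine f -> locally_piecewise_affine g ->
  locally_piecewise_affine (fun x => f x - g x).
Proof.
  intros Hf Hg F HF; apply (affine_near_minus F (FF := germ_filter_Filter F HF)); auto.
Qed.

Lemma lpa_scal k f : locally_piecewise_affine f ->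
  locally_piecewise_affine (fun x => k * f x).
Proof.
  intros Hf F HF; apply (affine_near_scal F (FF := germ_filter_Filter F HF)); auto.
Qed.

Lemma lpa_min f g : locally_piecewise_affine f -> locally_piecewise_affine g ->
  locally_piecewise_affine (fun x => Rmin (f x) (g x)).
Proof.
  intros Hf Hg F HF; apply (affine_near_min F (FF := germ_filter_Filter F HF)); auto.
  apply germ_filter_sign_stable, HF.
Qed.

Lemma lpa_sum1 n (f : nat -> R -> R) : (forall u, locally_piecewise_affine (f u)) ->
  locally_piecewise_affine (fun x => sum1 n (fun u => f u x)).
Proof. intros Hf; induction n; simpl; [apply lpa_const|apply lpa_plus; auto]. Qed.

Lemma lpa_sum0 n (f : nat -> R -> R) : (forall u, locally_piecewise_affine (f u)) ->
  locally_piecewise_affine (fun x => sum0 n (fun u => f u x)).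
Proof. intros Hf; induction n; simpl; [apply lpa_const|apply lpa_plus; auto]. Qed.

Definition affine_on (f : R -> R) (u v : R) : Prop :=
  exists s c, forall x, u <= x <= v -> f x = s * x + c.

Lemma affine_on_sub f u v u' v' :
  affine_on f u v -> u <= u' -> v' <= v -> affine_on f u' v'.
Proof. intros [s [c H]] Hu Hv; exists s, c; intros x Hx; apply H; lra. Qed.

Lemma lpa_affine_around g : locally_piecewise_affine g ->
  forall th, exists e, 0 < e /\ affine_on g th (th + e) /\ affine_on g (th - e) th.
Proof.
  intros Hg th.
  destruct (Hg _ (germ_right th)) as [s1 [c1 [e1 H1]]].
  destruct (Hg _ (germ_left th)) as [s2 [c2 [e2 H2]]].
  pose proof (cond_pos e1); pose proof (cond_pos e2).
  pose proof (Rmin_l e1 e2); pose proof (Rmin_r e1 e2).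
  assert (0 < Rmin e1 e2) by (apply Rmin_pos; assumption).
  exists (Rmin e1 e2 / 2); split; [lra|].
  assert (Hball : forall e x, Rabs (x - th) < e -> ball th e x) by auto.
  split; [exists s1, c1|exists s2, c2]; intros x Hx;
    [apply H1|apply H2]; try lra; apply Hball, Rabs_def1; lra.
Qed.

Lemma lpa_affine_eventually g : locally_piecewise_affine g ->
  exists M s c, forall x, M <= x -> g x = s * x + c.
Proof.
  intros Hg; destruct (Hg _ germ_pinfty) as [s [c [M HM]]].
  exists (M + 1), s, c; intros x Hx; apply HM; lra.
Qed.

Lemma lpa_continuous g : locally_piecewise_affine g -> forall th, continuous g th.
Proof.
  intros Hg th P HP.
  destruct (Hg _ (germ_right th)) as [s1 [c1 H1]].
  destruct (Hg _ (germ_left th)) as [s2 [c2 H2]].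
  assert (E1 : g th = s1 * th + c1) by exact (locally_singleton _ _ H1 (Rle_refl th)).
  assert (E2 : g th = s2 * th + c2) by exact (locally_singleton _ _ H2 (Rle_refl th)).
  assert (P1 : locally th (fun x => P (s1 * x + c1))).
  { apply (affine_continuous s1 c1 th); rewrite <- E1; exact HP. }
  assert (P2 : locally th (fun x => P (s2 * x + c2))).
  { apply (affine_continuous s2 c2 th); rewrite <- E2; exact HP. }
  unfold within in H1, H2.
  generalize (filter_and _ _ (filter_and _ _ H1 H2) (filter_and _ _ P1 P2)).
  unfold filtermap; apply filter_imp; intros x [[G1 G2] [Q1 Q2]].
  destruct (Rle_dec th x); [rewrite G1 by lra|rewrite G2 by lra]; assumption.
Qed.

Definition pl_upto (g : R -> R) (u : R) : Prop :=
  exists n (br sl ic : nat -> R),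
    br O = 0 /\
    (forall i, (i < n)%nat -> br i < br (Datatypes.S i)) /\
    (forall i th, (i < n)%nat -> br i <= th <= br (Datatypes.S i) ->
                  g th = sl i * th + ic i) /\
    br n = u.

Lemma pl_upto_0 g : pl_upto g 0.
Proof.
  exists O, (fun _ => 0), (fun _ => 0), (fun _ => 0).
  repeat split; intros; lia.
Qed.

Lemma pl_upto_extend g u v : pl_upto g u -> u < v -> affine_on g u v -> pl_upto g v.
Proof.
  intros [n [br [sl [ic [H0 [Hinc [Hpiece Hn]]]]]]] Huv [s [c Hsc]].
  exists (Datatypes.S n), (fun i => if le_lt_dec i n then br i else v),
    (fun i => if le_lt_dec n i then s else sl i),
    (fun i => if le_lt_dec n i then c else ic i).
  repeat split.
  - exact H0.
  - intros i Hi; destruct (le_lt_dec i n); [|lia].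
    destruct (le_lt_dec (Datatypes.S i) n); [apply Hinc; lia|].
    replace i with n by lia; lra.
  - intros i th Hi Hth; destruct (le_lt_dec i n); [|lia].
    destruct (le_lt_dec (Datatypes.S i) n); destruct (le_lt_dec n i); try lia.
    + apply Hpiece; auto.
    + replace i with n in * by lia; apply Hsc; lra.
  - destruct (le_lt_dec (Datatypes.S n) n); [lia|reflexivity].
Qed.

(* Compactness of [0, M]: the supremum of the [u <= M] up to which [g] is
   finitely piecewise affine is reached, and equals [M], because [g] is affine
   on both sides of every point. *)
Lemma lpa_pl_upto g M : locally_piecewise_affine g -> 0 <= M -> pl_upto g M.
Proof.
  intros Hg HM.
  set (E := fun u => 0 <= u <= M /\ pl_upto g u).
  destruct (completeness E) as [m [Hub Hlub]].
  { exists M; intros u [Hu _]; lra. }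
  { exists 0; split; [lra|apply pl_upto_0]. }
  assert (Hm0 : 0 <= m) by (apply Hub; split; [lra|apply pl_upto_0]).
  assert (HmM : m <= M) by (apply Hlub; intros u [Hu _]; lra).
  destruct (lpa_affine_around g Hg m) as [e [He [Aright Aleft]]].
  assert (Hm : pl_upto g m).
  { destruct (classic (exists u, E u /\ m - e < u)) as [[u [[Hu Pu] Hu2]]|Hnone].
    - assert (u <= m) by (apply Hub; split; auto).
      destruct (Req_dec u m) as [<-|Hne]; [exact Pu|].
      apply (pl_upto_extend g u m Pu); [lra|].
      apply (affine_on_sub _ _ _ _ _ Aleft); lra.
    - assert (m <= m - e); [|lra].
      apply Hlub; intros u Eu; destruct (Rle_dec u (m - e)); [assumption|].
      exfalso; apply Hnone; exists u; split; [assumption|lra]. }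
  destruct (Rle_lt_dec M m) as [Hle|Hlt]; [replace M with m by lra; exact Hm|].
  exfalso; set (v := Rmin (m + e) M).
  assert (m < v) by (apply Rmin_glb_lt; lra).
  assert (v <= M) by apply Rmin_r.
  assert (v <= m + e) by apply Rmin_l.
  assert (Ev : E v).
  { split; [lra|]; apply (pl_upto_extend g m v Hm); [assumption|].
    apply (affine_on_sub _ _ _ _ _ Aright); lra. }
  specialize (Hub v Ev); lra.
Qed.

Lemma affine_right_quotient f th e s c : 0 < e ->
  (forall x, th <= x <= th + e -> f x = s * x + c) ->
  filterlim (fun h => (f (th + h) - f th) / h) (at_right 0) (locally s).
Proof.
  intros He Hf; apply (filterlim_ext_loc (fun _ => s)); [|apply filterlim_const].
  exists (mkposreal e He); intros h Hh Hpos.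
  change (Rabs (h - 0) < e) in Hh; apply Rabs_def2 in Hh.
  rewrite !Hf by lra; field; lra.
Qed.

Lemma affine_left_quotient f th e s c : 0 < e ->
  (forall x, th - e <= x <= th -> f x = s * x + c) ->
  filterlim (fun h => (f (th + h) - f th) / h) (at_left 0) (locally s).
Proof.
  intros He Hf; apply (filterlim_ext_loc (fun _ => s)); [|apply filterlim_const].
  exists (mkposreal e He); intros h Hh Hneg.
  change (Rabs (h - 0) < e) in Hh; apply Rabs_def2 in Hh.
  rewrite !Hf by lra; field; lra.
Qed.

Lemma derivable_pt_lim_at_right f x l : derivable_pt_lim f x l ->
  filterlim (fun h => (f (x + h) - f x) / h) (at_right 0) (locally l).
Proof.
  intros Hd; apply filterlim_locally; intros eps.
  destruct (Hd eps (cond_pos eps)) as [d Hdd].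
  exists d; intros h Hh Hpos.
  change (Rabs (h - 0) < d) in Hh; rewrite Rminus_0_r in Hh.
  apply Hdd; [lra|exact Hh].
Qed.

Section NonincreasingPiecewiseAffine.

Variables f g : R -> R.
Hypothesis g_lpa : locally_piecewise_affine g.
Hypothesis f_eq_g : forall x, 0 <= x -> f x = g x.
Hypothesis f_antitone : forall th1 th2, 0 <= th1 <= th2 -> f th2 <= f th1.

Lemma continuous_nonneg_lpa : continuous_nonneg f.
Proof.
  intros th Hth; rewrite f_eq_g by exact Hth.
  apply (filterlim_within_ext (F := locally th) (fun x => 0 <= x) g f);
    [intros; symmetry; auto|].
  apply (filterlim_filter_le_1 (F := locally th));
    [apply filter_le_within|apply lpa_continuous, g_lpa].
Qed.

Lemma piecewise_linear_nonneg_lpa : piecewise_linear_nonneg f.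
Proof.
  destruct (lpa_affine_eventually g g_lpa) as [M [s [c Htail]]].
  destruct (lpa_pl_upto g (Rmax M 0) g_lpa (Rmax_r M 0))
    as [n [br [sl [ic [H0 [Hinc [Hpiece Hn]]]]]]].
  assert (Hbr : forall i, (i <= n)%nat -> 0 <= br i).
  { induction i as [|i IH]; intros Hi; [lra|].
    specialize (IH ltac:(lia)); specialize (Hinc i ltac:(lia)); lra. }
  exists n, br, (fun i => if le_lt_dec n i then s else sl i),
    (fun i => if le_lt_dec n i then c else ic i).
  repeat split; [exact H0|exact Hinc| |].
  - intros i th Hi Hth; destruct (le_lt_dec n i); [lia|].
    rewrite f_eq_g by (specialize (Hbr i ltac:(lia)); lra); auto.
  - intros th Hth; destruct (le_lt_dec n n); [|lia].
    pose proof (Rmax_l M 0); pose proof (Rmax_r M 0).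
    rewrite f_eq_g by lra; apply Htail; lra.
Qed.

Lemma right_piece th : 0 <= th -> exists e s c, 0 < e /\ s <= 0 /\
  forall x, th <= x <= th + e -> f x = s * x + c.
Proof.
  intros Hth; destruct (lpa_affine_around g g_lpa th) as [e [He [[s [c Hg]] _]]].
  assert (Hf : forall x, th <= x <= th + e -> f x = s * x + c)
    by (intros; rewrite f_eq_g by lra; auto).
  exists e, s, c; repeat split; [exact He| |exact Hf].
  pose proof (f_antitone th (th + e) ltac:(lra)).
  rewrite !Hf in H by lra; nra.
Qed.

Lemma left_piece th : 0 < th -> exists e s c, 0 < e /\ s <= 0 /\
  forall x, th - e <= x <= th -> f x = s * x + c.
Proof.
  intros Hth; destruct (lpa_affine_around g g_lpa th) as [e0 [He0 [_ [s [c Hg]]]]].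
  pose proof (Rmin_l e0 th); pose proof (Rmin_r e0 th).
  assert (He : 0 < Rmin e0 th) by (apply Rmin_pos; assumption).
  set (e := Rmin e0 th) in *.
  assert (Hf : forall x, th - e <= x <= th -> f x = s * x + c)
    by (intros; rewrite f_eq_g by lra; apply Hg; lra).
  exists e, s, c; repeat split; [exact He| |exact Hf].
  pose proof (f_antitone (th - e) th ltac:(lra)).
  rewrite !Hf in H1 by lra; nra.
Qed.

Lemma right_derivative_nonpos th : 0 <= th -> exists l, l <= 0 /\
  filterlim (fun h => (f (th + h) - f th) / h) (at_right 0) (locally l).
Proof.
  intros Hth; destruct (right_piece th Hth) as [e [s [c [He [Hs Hf]]]]].
  exists s; split; [exact Hs|]; exact (affine_right_quotient f th e s c He Hf).
Qed.

Lemma left_derivative_nonpos th : 0 < th -> exists l, l <= 0 /\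
  filterlim (fun h => (f (th + h) - f th) / h) (at_left 0) (locally l).
Proof.
  intros Hth; destruct (left_piece th Hth) as [e [s [c [He [Hs Hf]]]]].
  exists s; split; [exact Hs|]; exact (affine_left_quotient f th e s c He Hf).
Qed.

Lemma derivative_nonpos th l : 0 < th -> is_derive f th l -> l <= 0.
Proof.
  intros Hth Hd; apply is_derive_Reals, derivable_pt_lim_at_right in Hd.
  destruct (right_derivative_nonpos th (Rlt_le _ _ Hth)) as [s [Hs Hlim]].
  rewrite (filterlim_locally_unique _ l s Hd Hlim); exact Hs.
Qed.

End NonincreasingPiecewiseAffine.

Lemma sum0_ext n (u v : nat -> R) : (forall k, u k = v k) -> sum0 n u = sum0 n v.
Proof. intros H; induction n; simpl; [reflexivity|rewrite IHn, H; reflexivity]. Qed.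

Lemma sum0_le n (u v : nat -> R) : (forall k, u k <= v k) -> sum0 n u <= sum0 n v.
Proof. intros H; induction n; simpl; [lra|specialize (H n); lra]. Qed.

Lemma greedy_ray_lpa P S0 Sbar0 xbar0 a b t :
  locally_piecewise_affine (fun th => greedy P S0 (Sbar0 + a * th) (xbar0 + b * th) t).
Proof.
  induction t as [|t IH]; simpl; [apply lpa_const|].
  destruct (Rle_dec (P (Datatypes.S t)) 0);
    [apply lpa_minus|apply lpa_plus]; auto;
    (apply lpa_min; [apply lpa_min; [apply lpa_affine|apply lpa_const]|]); auto.
  apply lpa_minus; [apply lpa_affine|exact IH].
Qed.

Definition EUE_greedy (T N : nat) (Ps : nat -> nat -> R) (S0 Sbar xbar : R) : R :=
  / INR N * sum0 N (fun k =>
     sum1 T (fun t => pminus (Ps k t)) + P1_obj T (greedy (Ps k) S0 Sbar xbar)).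

Lemma EUE_greedy_eq T N Ps S0 Sbar xbar : 0 <= S0 <= Sbar -> 0 <= xbar ->
  EUE T N Ps S0 Sbar xbar = EUE_greedy T N Ps S0 Sbar xbar.
Proof.
  intros HS Hx; unfold EUE, EUE_greedy; f_equal; apply sum0_ext; intros k.
  rewrite P1_value_greedy by assumption; reflexivity.
Qed.

Lemma EUE_greedy_ray_lpa T N Ps S0 Sbar0 xbar0 a b :
  locally_piecewise_affine
    (fun th => EUE_greedy T N Ps S0 (Sbar0 + a * th) (xbar0 + b * th)).
Proof.
  apply lpa_scal.
  apply (lpa_sum0 N (fun k th => sum1 T (fun t => pminus (Ps k t)) +
    P1_obj T (greedy (Ps k) S0 (Sbar0 + a * th) (xbar0 + b * th)))); intros k.
  apply lpa_plus; [apply lpa_const|].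
  apply (lpa_sum1 T (fun t th =>
    Rmin 0 (greedy (Ps k) S0 (Sbar0 + a * th) (xbar0 + b * th) t
            - greedy (Ps k) S0 (Sbar0 + a * th) (xbar0 + b * th) (pred t)))).
  intros t; apply lpa_min; [apply lpa_const|apply lpa_minus; apply greedy_ray_lpa].
Qed.

Lemma EUE_antitone T N Ps S0 Sbar1 xbar1 Sbar2 xbar2 : (1 <= N)%nat ->
  0 <= S0 <= Sbar1 -> 0 <= xbar1 -> Sbar1 <= Sbar2 -> xbar1 <= xbar2 ->
  EUE T N Ps S0 Sbar2 xbar2 <= EUE T N Ps S0 Sbar1 xbar1.
Proof.
  intros HN HS Hx HSS Hxx; unfold EUE.
  apply Rmult_le_compat_l; [left; apply Rinv_0_lt_compat, lt_0_INR; lia|].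
  apply sum0_le; intros k; apply Rplus_le_compat_l, P1_value_antitone; assumption.
Qed.

Theorem theorem1 (T N : nat) (Ps : nat -> nat -> R) (S0 : R) :
  (1 <= T)%nat -> (1 <= N)%nat -> 0 <= S0 ->
  (forall Sbar xbar, S0 <= Sbar -> 0 <= xbar ->
     forall k, (k < N)%nat -> exists SoC, P1_feasible T (Ps k) S0 Sbar xbar SoC) /\
  (forall Sbar0 xbar0 a b, S0 <= Sbar0 -> 0 <= xbar0 -> 0 <= a -> 0 <= b ->
     (a <> 0 \/ b <> 0) ->
     let f := fun th => EUE T N Ps S0 (Sbar0 + a * th) (xbar0 + b * th) in
     continuous_nonneg f /\ piecewise_linear_nonneg f /\
     (forall th1 th2, 0 <= th1 <= th2 -> f th2 <= f th1) /\
     (forall th l, 0 < th -> is_derive f th l -> 0 <= - l) /\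
     (forall th, 0 <= th -> exists l, l <= 0 /\
        filterlim (fun h => (f (th + h) - f th) / h) (at_right 0) (locally l)) /\
     (forall th, 0 < th -> exists l, l <= 0 /\
        filterlim (fun h => (f (th + h) - f th) / h) (at_left 0) (locally l))).
Proof.
  intros _ HN HS0; split.
  - intros Sbar xbar HS Hx k _; exists (greedy (Ps k) S0 Sbar xbar).
    apply greedy_feasible; lra.
  - intros Sbar0 xbar0 a b HS Hx Ha Hb _ f.
    set (g := fun th => EUE_greedy T N Ps S0 (Sbar0 + a * th) (xbar0 + b * th)).
    assert (Hg : locally_piecewise_affine g) by apply EUE_greedy_ray_lpa.
    assert (Hfg : forall th, 0 <= th -> f th = g th)
      by (intros th Hth; apply EUE_greedy_eq; nra).
    assert (Hmono : forall th1 th2, 0 <= th1 <= th2 -> f th2 <= f th1)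
      by (intros th1 th2 Hth; apply EUE_antitone; [exact HN|nra..]).
    split; [apply (continuous_nonneg_lpa f g); assumption|].
    split; [apply (piecewise_linear_nonneg_lpa f g); assumption|].
    split; [exact Hmono|].
    split.
    { intros th l Hth Hd.
      pose proof (derivative_nonpos f g Hg Hfg Hmono th l Hth Hd); lra. }
    split; [apply (right_derivative_nonpos f g)|apply (left_derivative_nonpos f g)];
      assumption.
Qed.
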